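(* Let $a>0$ and let $\epsilon>0$ be sufficiently small. The regularized system $$\dot x=1,\qquad \epsilon\dot v=-a\epsilon v-\sin\!\left(\pi x\left[1+\tfrac12\psi(v)\right]\right)$$ does not possess periodic solutions (i.e. there is no solution with $v(x+T)=v(x)$ for all $x$, for some $T>0$).
   Context: $\psi:\mathbb{R}\to\mathbb{R}$ is a transition function: $C^1$ on $\mathbb{R}$ and $C^2$ on $[-1,1]$, with $\psi(v)=\operatorname{sign}(v)$ for $|v|\ge1$, $\psi'(v)>0$ for $|v|<1$, and $\operatorname{sign}\psi''(v)=-\operatorname{sign}(v)$ at $|v|=1$. *)

From Stdlib Require Import Reals.
From Coquelicot Require Import Coquelicot.
Open Scope R_scope.

Definition C1_on_R (f : R -> R) : Prop :=
  (forall x, ex_derive f x) /\ (forall x, continuous (Derive f) x).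

Definition is_derive_on_cc (g g2 : R -> R) (a b : R) : Prop :=
  forall x, a <= x <= b ->
    filterlim (fun y => (g y - g x) / (y - x))
      (within (fun y => a <= y <= b /\ y <> x) (locally x))
      (locally (g2 x)).

Definition continuous_on_cc (h : R -> R) (a b : R) : Prop :=
  forall x, a <= x <= b ->
    filterlim h (within (fun y => a <= y <= b) (locally x)) (locally (h x)).

(* Transition function psi: C^1 on R, C^2 on [-1,1] (psi'' denoted psi2,
   one-sided at +-1), psi = sign outside (-1,1), psi' > 0 on (-1,1),
   sign psi''(v) = - sign v at |v| = 1, i.e. psi''(1) < 0 < psi''(-1). *)
Definition transition_function (psi : R -> R) : Prop :=
  C1_on_R psi /\
  (exists psi2 : R -> R,
      is_derive_on_cc (Derive psi) psi2 (-1) 1 /\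
      continuous_on_cc psi2 (-1) 1 /\
      psi2 1 < 0 /\ 0 < psi2 (-1)) /\
  (forall v, 1 <= v -> psi v = 1) /\
  (forall v, v <= -1 -> psi v = -1) /\
  (forall v, -1 < v < 1 -> 0 < Derive psi v).

(* v : R -> R (as a function of x = t + const, since xdot = 1) solves
   eps v' = - a eps v - sin(pi x (1 + psi(v)/2)) on all of R. *)
Definition reg_solution (psi : R -> R) (a eps : R) (v : R -> R) : Prop :=
  forall x, ex_derive v x /\
    eps * Derive v x = - a * eps * v x - sin (PI * x * (1 + psi (v x) / 2)).

Definition periodic_solution (psi : R -> R) (a eps : R) (v : R -> R) : Prop :=
  reg_solution psi a eps v /\
  exists T, 0 < T /\ forall x, v (x + T) = v x.

(* If v is a T-periodic solution, comparing the equation at x, x + T and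
   x + 2T gives sin (PI T (1 + psi (v x) / 2)) = 0 for every x, so the
   continuous function psi o v is constant, say p.  Then v solves the linear
   equation eps v' = - a eps v - sin (c x) with c = PI (1 + p / 2) >= PI / 2.
   As psi is strictly increasing on [-1, 1] and equals -1 (resp. 1) to the
   left (resp. right) of it, either v >= 1, or v <= -1, or v is constant.
   No constant solves the linear equation, and for a periodic solution
   u x := v x + v (x + PI / c) satisfies eps u' = - a eps u, so u vanishes
   wherever u' does, which happens somewhere on a period; hence v takes values
   of both signs. *)

From Stdlib Require Import Reals Lra.
From Coquelicot Require Import Coquelicot.
Open Scope R_scope.

Lemma is_derive_shift (f : R -> R) (d x : R) :
  ex_derive f (x + d) -> is_derive (fun y => f (y + d)) x (Derive f (x + d)).
Proof. intros Hf. auto_derive; [exact Hf | apply Rmult_1_l]. Qed.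

Lemma Derive_periodic (f : R -> R) (T : R) :
  (forall x, ex_derive f x) -> (forall x, f (x + T) = f x) ->
  forall x, Derive f (x + T) = Derive f x.
Proof.
  intros Hf Hper x. symmetry. apply is_derive_unique.
  apply (is_derive_ext (fun y => f (y + T))); [exact Hper |].
  apply is_derive_shift, Hf.
Qed.

Lemma is_derive_0_const (f : R -> R) :
  (forall x, is_derive f x 0) -> forall x y, f x = f y.
Proof.
  intros Hf x y. destruct (Rtotal_order x y) as [Hxy | [-> | Hxy]]; [| reflexivity |].
  - apply eq_is_derive; [intros t _; apply Hf | exact Hxy].
  - symmetry. apply eq_is_derive; [intros t _; apply Hf | exact Hxy].
Qed.

Lemma periodic_Derive_vanishes (f : R -> R) (T : R) :
  0 < T -> (forall x, ex_derive f x) -> (forall x, f (x + T) = f x) ->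
  exists xi, Derive f xi = 0.
Proof.
  intros HT Hf Hper.
  destruct (MVT_cor2 f (Derive f) 0 T HT) as [xi [Heq _]].
  { intros c _. apply is_derive_Reals, Derive_correct, Hf. }
  exists xi. rewrite <- (Rplus_0_l T), Hper, Rplus_0_l in Heq.
  destruct (Rmult_integral (Derive f xi) (T - 0)) as [H | H]; lra.
Qed.

Lemma sin_eq_arith_progression (al be : R) :
  sin al = sin (al + be) -> sin (al + be) = sin (al + 2 * be) -> sin be = 0.
Proof.
  intros H1 H2.
  assert (Hsum : sin (al + 2 * be) + sin al = 2 * sin (al + be) * cos be).
  { replace (al + 2 * be) with ((al + be) + be) by ring.
    replace al with ((al + be) - be) at 2 by ring.
    rewrite sin_plus, sin_minus; ring. }
  assert (Hf : sin (al + be) * (1 - cos be) = 0) by lra.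
  pose proof (sin2_cos2 be) as Eb; pose proof (sin2_cos2 al) as Ea; unfold Rsqr in *.
  destruct (Rmult_integral _ _ Hf) as [Hs | Hc].
  - assert (Hal : sin al = 0) by lra.
    assert (Hcos : cos al * cos al = 1) by (rewrite Hal in Ea; lra).
    rewrite sin_plus, Hal in Hs.
    replace (sin be) with (cos al * (cos al * sin be))
      by (rewrite <- Rmult_assoc, Hcos; ring).
    replace (cos al * sin be) with 0 by lra. ring.
  - nra.
Qed.

Lemma sin_comp_0_const (th : R -> R) :
  (forall x, ex_derive th x) -> (forall x, sin (th x) = 0) ->
  forall x y, th x = th y.
Proof.
  intros Hth Hsin. apply is_derive_0_const. intros x.
  assert (Hchain : is_derive (fun y => sin (th y)) x (Derive th x * cos (th x))).
  { auto_derive; [apply Hth | now rewrite Rmult_1_l]. }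
  assert (Hcos : Derive th x * cos (th x) = 0).
  { apply is_derive_unique in Hchain. rewrite <- Hchain.
    rewrite (Derive_ext _ (fun _ => 0)) by exact Hsin. apply Derive_const. }
  assert (HD : Derive th x = 0).
  { pose proof (sin2_cos2 (th x)) as E. rewrite Hsin in E. unfold Rsqr in E.
    assert (Hcos2 : cos (th x) * cos (th x) = 1) by lra.
    replace (Derive th x) with (Derive th x * cos (th x) * cos (th x))
      by (rewrite Rmult_assoc, Hcos2; ring).
    rewrite Hcos. ring. }
  rewrite <- HD. apply Derive_correct, Hth.
Qed.

Section TransitionFunction.

Variable psi : R -> R.
Hypothesis Hpsi : transition_function psi.

Lemma transition_strict_increasing (s t : R) :
  -1 <= s -> s < t -> t <= 1 -> psi s < psi t.
Proof.
  destruct Hpsi as [[Hd _] [_ [_ [_ Hpos]]]]. intros Hs Hst Ht.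
  destruct (MVT_cor2 psi (Derive psi) s t Hst) as [c [Heq Hc]].
  { intros c _. apply is_derive_Reals, Derive_correct, Hd. }
  assert (0 < Derive psi c) by (apply Hpos; lra).
  assert (0 < Derive psi c * (t - s)) by (apply Rmult_lt_0_compat; lra).
  lra.
Qed.

Lemma transition_lt_1 (y : R) : y < 1 -> psi y < 1.
Proof.
  pose proof Hpsi as [_ [_ [H1 [Hm1 _]]]]. intros Hy.
  destruct (Rle_lt_dec y (-1)) as [Hle | Hgt].
  - rewrite Hm1 by exact Hle. lra.
  - rewrite <- (H1 1) by lra. apply transition_strict_increasing; lra.
Qed.

Lemma transition_gt_m1 (y : R) : -1 < y -> -1 < psi y.
Proof.
  pose proof Hpsi as [_ [_ [H1 [Hm1 _]]]]. intros Hy.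
  destruct (Rle_lt_dec 1 y) as [Hge | Hlt].
  - rewrite H1 by exact Hge. lra.
  - rewrite <- (Hm1 (-1)) by lra. apply transition_strict_increasing; lra.
Qed.

Lemma transition_ge_m1 (y : R) : -1 <= psi y.
Proof.
  pose proof Hpsi as [_ [_ [_ [Hm1 _]]]].
  destruct (Rle_lt_dec y (-1)) as [Hle | Hgt].
  - rewrite Hm1 by exact Hle. lra.
  - left. apply transition_gt_m1, Hgt.
Qed.

Lemma transition_eq_cases (y z : R) :
  psi y = psi z -> (1 <= y /\ 1 <= z) \/ (y <= -1 /\ z <= -1) \/ y = z.
Proof.
  pose proof Hpsi as [_ [_ [H1 [Hm1 _]]]]. intros Hyz.
  destruct (Rle_lt_dec 1 y) as [Hy1 | Hy1].
  { left. split; [exact Hy1 |].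
    destruct (Rle_lt_dec 1 z) as [Hz | Hz]; [exact Hz |].
    pose proof (transition_lt_1 z Hz). rewrite H1 in Hyz by exact Hy1. lra. }
  destruct (Rle_lt_dec y (-1)) as [Hym1 | Hym1].
  { right; left. split; [exact Hym1 |].
    destruct (Rle_lt_dec z (-1)) as [Hz | Hz]; [exact Hz |].
    pose proof (transition_gt_m1 z Hz). rewrite Hm1 in Hyz by exact Hym1. lra. }
  right; right.
  pose proof (transition_lt_1 y Hy1). pose proof (transition_gt_m1 y Hym1).
  assert (Hz1 : z < 1).
  { destruct (Rle_lt_dec 1 z) as [Hz | Hz]; [rewrite (H1 z Hz) in Hyz; lra | exact Hz]. }
  assert (Hzm1 : -1 < z).
  { destruct (Rle_lt_dec z (-1)) as [Hz | Hz]; [rewrite (Hm1 z Hz) in Hyz; lra | exact Hz]. }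
  destruct (Rtotal_order y z) as [Hlt | [Heq | Hlt]]; [| exact Heq |].
  - pose proof (transition_strict_increasing y z). lra.
  - pose proof (transition_strict_increasing z y). lra.
Qed.

Lemma transition_comp_const_cases (v : R -> R) :
  (forall x, psi (v x) = psi (v 0)) ->
  (forall x, 1 <= v x) \/ (forall x, v x <= -1) \/ (forall x, v x = v 0).
Proof.
  intros Hv.
  destruct (Rle_lt_dec 1 (v 0)) as [H0 | H0];
    [left | destruct (Rle_lt_dec (v 0) (-1)) as [H1 | H1]; [right; left | right; right]];
    intros x; destruct (transition_eq_cases (v x) (v 0) (Hv x)) as [? | [? | ?]]; lra.
Qed.

End TransitionFunction.

Definition linear_forced_solution (a eps c : R) (v : R -> R) : Prop :=
  forall x, ex_derive v x /\ eps * Derive v x = - a * eps * v x - sin (c * x).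

Section LinearForcedEquation.

Variables (a eps c : R) (v : R -> R).
Hypothesis Hsol : linear_forced_solution a eps c v.
Hypothesis Hc : c <> 0.

Lemma linear_forced_solution_not_const : ~ (forall x, v x = v 0).
Proof.
  intros Hconst.
  assert (HD : forall x, Derive v x = 0).
  { intros x. rewrite (Derive_ext v (fun _ => v 0)) by exact Hconst.
    apply Derive_const. }
  destruct (Hsol 0) as [_ E0]. destruct (Hsol (PI / 2 / c)) as [_ E1].
  rewrite HD, !Rmult_0_r, sin_0 in E0. rewrite HD, Hconst in E1.
  replace (c * (PI / 2 / c)) with (PI / 2) in E1 by (field; exact Hc).
  rewrite sin_PI2 in E1. lra.
Qed.

Lemma linear_forced_periodic_antipodal (T : R) :
  a * eps <> 0 -> 0 < T -> (forall x, v (x + T) = v x) ->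
  exists xi, v xi + v (xi + PI / c) = 0.
Proof.
  intros Hae HT Hper.
  set (d := PI / c).
  set (u := fun x => v x + v (x + d)).
  assert (Hv : forall x, ex_derive v x) by (intros x; apply Hsol).
  assert (Hu : forall x, is_derive u x (Derive v x + Derive v (x + d))).
  { intros x. apply (is_derive_plus v (fun y => v (y + d))).
    - apply Derive_correct, Hv.
    - apply is_derive_shift, Hv. }
  destruct (periodic_Derive_vanishes u T HT) as [xi Hxi].
  { intros x. eexists. apply Hu. }
  { intros x. unfold u. rewrite Hper.
    replace (x + T + d) with (x + d + T) by ring. rewrite Hper. reflexivity. }
  rewrite (is_derive_unique _ _ _ (Hu xi)) in Hxi.
  exists xi.
  destruct (Hsol xi) as [_ A]. destruct (Hsol (xi + d)) as [_ B].
  replace (c * (xi + d)) with (c * xi + PI) in B by (unfold d; field; exact Hc).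
  rewrite neg_sin in B.
  assert (Hsum : a * eps * (v xi + v (xi + d)) = 0).
  { replace (a * eps * (v xi + v (xi + d)))
      with (- eps * (Derive v xi + Derive v (xi + d))) by lra.
    rewrite Hxi. ring. }
  destruct (Rmult_integral _ _ Hsum) as [H | H]; [contradiction | exact H].
Qed.

End LinearForcedEquation.

Lemma reg_solution_linear_forced (psi : R -> R) (a eps p : R) (v : R -> R) :
  reg_solution psi a eps v -> (forall x, psi (v x) = p) ->
  linear_forced_solution a eps (PI * (1 + p / 2)) v.
Proof.
  intros Hsol Hp x. destruct (Hsol x) as [Hv E]. split; [exact Hv |].
  rewrite E, Hp. f_equal. f_equal. ring.
Qed.

Lemma periodic_reg_solution_resonance (psi : R -> R) (a eps T : R) (v : R -> R) :
  reg_solution psi a eps v -> (forall x, v (x + T) = v x) ->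
  forall x, sin (PI * T * (1 + psi (v x) / 2)) = 0.
Proof.
  intros Hsol Hper.
  assert (Hv : forall x, ex_derive v x) by (intros x; apply Hsol).
  assert (Hforcing : forall x,
    sin (PI * (x + T) * (1 + psi (v x) / 2)) = sin (PI * x * (1 + psi (v x) / 2))).
  { intros x. destruct (Hsol x) as [_ E1]. destruct (Hsol (x + T)) as [_ E2].
    rewrite (Derive_periodic v T Hv Hper), Hper in E2. lra. }
  intros x.
  pose proof (Hforcing x) as H1. pose proof (Hforcing (x + T)) as H2. rewrite Hper in H2.
  set (k := 1 + psi (v x) / 2) in *.
  apply (sin_eq_arith_progression (PI * x * k)).
  - replace (PI * x * k + PI * T * k) with (PI * (x + T) * k) by ring.
    symmetry. exact H1.
  - replace (PI * x * k + PI * T * k) with (PI * (x + T) * k) by ring.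
    replace (PI * x * k + 2 * (PI * T * k)) with (PI * (x + T + T) * k) by ring.
    symmetry. exact H2.
Qed.

Lemma periodic_reg_solution_psi_const (psi : R -> R) (a eps : R) (v : R -> R) :
  C1_on_R psi -> periodic_solution psi a eps v ->
  forall x, psi (v x) = psi (v 0).
Proof.
  intros [Hpsi _] [Hsol [T [HT Hper]]] x.
  assert (Hth : forall x y,
    PI * T * (1 + psi (v x) / 2) = PI * T * (1 + psi (v y) / 2)).
  { apply sin_comp_0_const.
    - intros y. auto_derive. split; [apply Hpsi | split; [apply Hsol | exact I]].
    - exact (periodic_reg_solution_resonance psi a eps T v Hsol Hper). }
  specialize (Hth x 0).
  assert (0 < PI * T) by (apply Rmult_lt_0_compat; [exact PI_RGT_0 | exact HT]).
  apply Rmult_eq_reg_l in Hth; lra.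
Qed.

Theorem theorem7 (psi : R -> R) (a : R) :
  transition_function psi -> 0 < a ->
  exists eps0, 0 < eps0 /\
    forall eps, 0 < eps < eps0 ->
      ~ exists v : R -> R, periodic_solution psi a eps v.
Proof.
  intros Hpsi Ha. exists 1. split; [lra |].
  intros eps [Heps _] [v Hperiodic].
  pose proof Hperiodic as [Hsol [T [HT Hper]]].
  pose proof (periodic_reg_solution_psi_const psi a eps v (proj1 Hpsi) Hperiodic) as Hconst.
  pose proof (reg_solution_linear_forced psi a eps (psi (v 0)) v Hsol Hconst) as Hlin.
  set (c := PI * (1 + psi (v 0) / 2)) in Hlin.
  assert (Hc : c <> 0).
  { pose proof (transition_ge_m1 psi Hpsi (v 0)). pose proof PI_RGT_0.
    unfold c. nra. }
  assert (Hae : a * eps <> 0) by nra.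
  destruct (transition_comp_const_cases psi Hpsi v Hconst) as [Hge | [Hle | Hv]].
  - destruct (linear_forced_periodic_antipodal a eps c v Hlin Hc T Hae HT Hper) as [xi Hxi].
    pose proof (Hge xi). pose proof (Hge (xi + PI / c)). lra.
  - destruct (linear_forced_periodic_antipodal a eps c v Hlin Hc T Hae HT Hper) as [xi Hxi].
    pose proof (Hle xi). pose proof (Hle (xi + PI / c)). lra.
  - exact (linear_forced_solution_not_const a eps c v Hlin Hc Hv).
Qed.
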